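(* Let $S=\{p_1,\dots,p_n\}$ be a set of $n$ distinct primes. The spectrum of $\mathbf{U}_S$ on $\mathcal{H}^n$ is the set \[\{p_1^{k_1}\cdots p_n^{k_n}\,:\,k_j\in\mathbb{N}=\{0,1,2,\dots\}\text{ for every }j\},\] and each eigenvalue has multiplicity $1$.
   Context: For a power series $f(x)=\sum_{n\ge0}a_nx^n$ and a positive integer $q$, $U_qf(x)=\sum_{n\ge0}a_{qn}x^n$. For $k\in\mathbb{N}$ let $\phi_k(x)=(x\frac{d}{dx})^k\big(\frac{1}{1-x}\big)$, and let $\mathcal{V}$ be the complex span of $\phi_0,\phi_1,\dots$. Let $\mathcal{H}^n=\mathcal{V}\otimes\cdots\otimes\mathcal{V}$ ($n$ factors), where $f_1\otimes\cdots\otimes f_n$ is identified with the function $f_1(x_1)\cdots f_n(x_n)$. The operator $\mathbf{U}_S=U_{p_1}\otimes\cdots\otimes U_{p_n}$ is defined by $\mathbf{U}_S(f_1\otimes\cdots\otimes f_n)(x_1,\dots,x_n)=(U_{p_1}f_1)(x_1)\cdots(U_{p_n}f_n)(x_n)$, extended linearly. The spectrum is the set of $\lambda$ with $\mathbf{U}_SF=\lambda F$ for some nonzero $F\in\mathcal{H}^n$; the multiplicity of $\lambda$ is the dimension of its eigenspace. *)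

From Stdlib Require Import Reals.
From mathcomp Require Import all_boot all_algebra complex.
From mathcomp Require Import Rstruct.

Set Implicit Arguments.
Unset Strict Implicit.
Unset Printing Implicit Defensive.
Import GRing.Theory Num.Theory.
Local Open Scope ring_scope.

Definition C : numClosedFieldType := (Rdefinitions.R)[i].

(* A (formal) power series in one variable, f(x) = sum_m a_m x^m, is
   identified with its coefficient sequence m |-> a_m. *)
Definition series1 := nat -> C.

(* A power series in n variables x_0,...,x_{n-1} is identified with its
   coefficient family indexed by multi-indices m : 'I_n -> nat. *)
Definition seriesn (n : nat) := ('I_n -> nat) -> C.

Definition Uq (q : nat) (f : series1) : series1 := fun m => f (q * m)%N.

Definition xDx (f : series1) : series1 := fun m => m%:R * f m.

Definition geom : series1 := fun _ => 1.

Definition phi (k : nat) : series1 := iter k xDx geom.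

Definition inV (f : series1) : Prop :=
  exists (N : nat) (c : 'I_N -> C) (k : 'I_N -> nat),
    f = fun m => \sum_(j < N) c j * phi (k j) m.

Definition tensor (n : nat) (f : 'I_n -> series1) : seriesn n :=
  fun m => \prod_(i < n) f i (m i).

Definition inH (n : nat) (F : seriesn n) : Prop :=
  exists (N : nat) (c : 'I_N -> C) (f : 'I_N -> 'I_n -> series1),
    (forall j i, inV (f j i)) /\
    F = fun m => \sum_(j < N) c j * tensor (f j) m.

(* U_S = U_{p_1} (x) ... (x) U_{p_n}: on coefficient families it acts by
   F |-> (m |-> F (p_1 m_1, ..., p_n m_n)); on pure tensors this is
   exactly (U_{p_1} f_1)(x_1) ... (U_{p_n} f_n)(x_n), and it is linear. *)
Definition US (n : nat) (p : 'I_n -> nat) (F : seriesn n) : seriesn n :=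
  fun m => F (fun i => (p i * m i)%N).

Lemma US_tensor (n : nat) (p : 'I_n -> nat) (f : 'I_n -> series1) :
  US p (tensor f) = tensor (fun i => Uq (p i) (f i)).
Proof. by []. Qed.

Definition eigvec (n : nat) (p : 'I_n -> nat) (lam : C) (F : seriesn n) : Prop :=
  inH F /\ US p F = (fun m => lam * F m).

Definition in_spectrum (n : nat) (p : 'I_n -> nat) (lam : C) : Prop :=
  exists F : seriesn n, eigvec p lam F /\ F <> (fun _ => 0).

Definition multiplicity_one (n : nat) (p : 'I_n -> nat) (lam : C) : Prop :=
  exists F : seriesn n, [/\ eigvec p lam F, F <> (fun _ => 0) &
    forall G, eigvec p lam G -> exists a : C, G = (fun m => a * F m)].

(* Since phi_k has coefficients m |-> m^k, every element of H^n is a finite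
   linear combination of the monomials m |-> m_1^k_1 ... m_n^k_n, and U_S
   multiplies the monomial of exponent k by p^k = p_1^k_1 ... p_n^k_n.  By
   unique factorisation, distinct exponents give distinct eigenvalues.  If
   U_S F = lam F with F = sum_a c_a (monomial a), applying the polynomial
   prod_y (U_S - y) to F yields prod_y (lam - y) F = sum_a c_a prod_y (p^a - y)
   (monomial a); taking y over all the p^a forces lam to be one of them, and
   taking y over the p^a different from lam shows F is a multiple of the
   single monomial with eigenvalue lam.  No linear independence is needed. *)

From mathcomp Require Import all_boot all_algebra complex.
From mathcomp Require Import Rstruct.
From mathcomp Require Import ring.
From Stdlib Require Import FunctionalExtensionality.
Local Open Scope ring_scope.
Import GRing.Theory Num.Theory.

Set Implicit Arguments.
Unset Strict Implicit.
Unset Printing Implicit Defensive.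

Definition in_span (K : pzRingType) (X I : Type) (v : I -> X -> K) (F : X -> K) :=
  exists s : seq (K * I), forall x, F x = \sum_(a <- s) a.1 * v a.2 x.

Section Span.
Variables (K : comPzRingType) (X I : Type) (v : I -> X -> K).

Lemma in_span_eq F G : (forall x, F x = G x) -> in_span v F -> in_span v G.
Proof. by move=> FG [s Fs]; exists s => x; rewrite -FG. Qed.

Lemma in_span0 : in_span v (fun _ => 0).
Proof. by exists [::] => x; rewrite big_nil. Qed.

Lemma in_spanD F G : in_span v F -> in_span v G -> in_span v (fun x => F x + G x).
Proof. by move=> [s Fs] [t Gt]; exists (s ++ t) => x; rewrite Fs Gt big_cat. Qed.

Lemma in_spanZ c F : in_span v F -> in_span v (fun x => c * F x).
Proof.
move=> [s Fs]; exists [seq (c * a.1, a.2) | a <- s] => x.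
by rewrite Fs big_map mulr_sumr; apply: eq_bigr => a _; rewrite mulrA.
Qed.

Lemma in_span_sum J (r : seq J) (c : J -> K) (G : J -> X -> K) :
  (forall j, in_span v (G j)) -> in_span v (fun x => \sum_(j <- r) c j * G j x).
Proof.
move=> spanG; elim: r => [|j r IHr].
  by apply: in_span_eq in_span0 => x; rewrite big_nil.
apply: in_span_eq (in_spanD (in_spanZ (c j) (spanG j)) IHr) => x.
by rewrite big_cons.
Qed.

Variables (op : I -> I -> I) (i1 : I).
Hypothesis v_op : forall i j x, v (op i j) x = v i x * v j x.
Hypothesis v_i1 : forall x, v i1 x = 1.

Lemma in_spanM F G : in_span v F -> in_span v G -> in_span v (fun x => F x * G x).
Proof.
move=> [s Fs] [t Gt].
exists [seq (a.1 * b.1, op a.2 b.2) | a <- s, b <- t] => x.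
rewrite Fs Gt big_allpairs_dep mulr_suml; apply: eq_bigr => a _.
by rewrite mulr_sumr; apply: eq_bigr => b _ /=; rewrite v_op; ring.
Qed.

Lemma in_span_prod J (r : seq J) (G : J -> X -> K) :
  (forall j, in_span v (G j)) -> in_span v (fun x => \prod_(j <- r) G j x).
Proof.
move=> spanG; elim: r => [|j r IHr].
  by exists [:: (1, i1)] => x; rewrite big_nil big_seq1 v_i1 mulr1.
by apply: in_span_eq (in_spanM (spanG j) IHr) => x; rewrite big_cons.
Qed.

End Span.

Section Eigen.
Variables (K : fieldType) (X : Type) (I : eqType) (sigma : X -> X).
Variables (v : I -> X -> K) (mu : I -> K).
Hypothesis v_eigen : forall i x, v i (sigma x) = mu i * v i x.
Variables (lam : K) (F : X -> K) (s : seq (K * I)).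
Hypothesis F_span : forall x, F x = \sum_(a <- s) a.1 * v a.2 x.
Hypothesis F_eigen : forall x, F (sigma x) = lam * F x.

Lemma prod_sub_eigen (r : seq K) x :
  \prod_(y <- r) (lam - y) * F x =
  \sum_(a <- s) a.1 * \prod_(y <- r) (mu a.2 - y) * v a.2 x.
Proof.
elim: r x => [|y r IHr] x.
  by rewrite big_nil mul1r F_span; apply: eq_bigr => a _; rewrite big_nil mulr1.
have -> : \sum_(a <- s) a.1 * \prod_(z <- y :: r) (mu a.2 - z) * v a.2 x =
    \sum_(a <- s) a.1 * \prod_(z <- r) (mu a.2 - z) * v a.2 (sigma x)
  - y * \sum_(a <- s) a.1 * \prod_(z <- r) (mu a.2 - z) * v a.2 x.
  by rewrite mulr_sumr -sumrB; apply: eq_bigr => a _; rewrite big_cons v_eigen; ring.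
by rewrite -!IHr F_eigen big_cons; ring.
Qed.

Lemma eigenvalue_notin_zero : lam \notin [seq mu a.2 | a <- s] -> forall x, F x = 0.
Proof.
move=> lam_notin x; apply/eqP.
have := prod_sub_eigen [seq mu a.2 | a <- s] x.
rewrite [X in _ = X]big1_seq => [/eqP|a /andP [_ a_s]]; last first.
  suff /eqP -> : \prod_(y <- [seq mu b.2 | b <- s]) (mu a.2 - y) == 0.
    by rewrite mulr0 mul0r.
  rewrite prodf_seq_eq0; apply/hasP; exists (mu a.2); last by rewrite subrr eqxx.
  exact: (map_f (fun b => mu b.2)).
rewrite mulf_eq0 => /orP [|//].
rewrite prodf_seq_eq0 => /hasP [y y_s]; rewrite subr_eq0 => /eqP lam_y.
by rewrite lam_y y_s in lam_notin.
Qed.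

Lemma eigenvector_multiple (w : X -> K) :
  (forall i x, mu i = lam -> v i x = w x) ->
  exists c, forall x, F x = c * w x.
Proof.
move=> v_w; set r := [seq y <- [seq mu a.2 | a <- s] | y != lam].
have P_neq0 : \prod_(y <- r) (lam - y) != 0.
  rewrite prodf_seq_neq0; apply/allP => y.
  by rewrite mem_filter subr_eq0 eq_sym => /andP [].
exists (\sum_(a <- s | mu a.2 == lam) a.1) => x.
apply: (mulfI P_neq0); rewrite prod_sub_eigen mulrCA mulr_suml [RHS]big_mkcond /=.
apply: eq_big_seq => a a_s; have [mu_lam|mu_neq] := eqVneq (mu a.2) lam.
  by rewrite v_w // mu_lam; ring.
suff /eqP -> : \prod_(y <- r) (mu a.2 - y) == 0 by rewrite mulr0 mul0r.
rewrite prodf_seq_eq0; apply/hasP; exists (mu a.2); last by rewrite subrr eqxx.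
by rewrite mem_filter mu_neq map_f.
Qed.

End Eigen.

Lemma phiE k m : phi k m = m%:R ^+ k.
Proof. by elim: k => [|k IHk]; rewrite ?expr0 // /phi iterS -/(phi k) /xDx IHk exprS. Qed.

Section Monomials.
Variable n : nat.

Definition monomial (k : {ffun 'I_n -> nat}) (m : 'I_n -> nat) : C :=
  \prod_(i < n) (m i)%:R ^+ k i.

Lemma monomialD (k k' : {ffun 'I_n -> nat}) m :
  monomial [ffun i => k i + k' i]%N m = monomial k m * monomial k' m.
Proof. by rewrite /monomial -big_split; apply: eq_bigr => i _; rewrite ffunE exprD. Qed.

Lemma monomial0 m : monomial [ffun _ => 0%N] m = 1.
Proof. by rewrite /monomial big1 // => i _; rewrite ffunE. Qed.

Lemma monomial_neq0 k : monomial k <> (fun _ => 0).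
Proof.
move=> /(congr1 (fun G => G (fun _ => 1%N))) /eqP.
by rewrite /monomial big1 ?oner_eq0 // => i _; rewrite expr1n.
Qed.

Lemma monomial_inH k : inH (monomial k).
Proof.
exists 1%N, (fun _ => 1), (fun _ i => phi (k i)); split.
  move=> _ i; exists 1%N, (fun _ => 1), (fun _ => k i).
  by apply: functional_extensionality => m; rewrite big_ord1 mul1r.
apply: functional_extensionality => m; rewrite big_ord1 mul1r.
by apply: eq_bigr => i _; rewrite phiE.
Qed.

Lemma inV_span_monomial f i : inV f -> in_span monomial (fun m => f (m i)).
Proof.
move=> [N [c [k ->]]].
apply: in_span_sum => j.
exists [:: (1, [ffun l => if l == i then k j else 0%N])] => m.
rewrite big_seq1 mul1r phiE /monomial (bigD1 i) //= ffunE eqxx big1 ?mulr1 // => l.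
by rewrite ffunE => /negbTE ->.
Qed.

Lemma inH_span_monomial F : inH F -> in_span monomial F.
Proof.
move=> [N [c [f [f_V ->]]]].
apply: in_span_sum => j.
by apply: (in_span_prod monomialD monomial0) => i; apply: inV_span_monomial.
Qed.

Variable p : 'I_n -> nat.

Definition pow_prod (k : 'I_n -> nat) : nat := \prod_(i < n) p i ^ k i.

Lemma monomial_US (k : {ffun 'I_n -> nat}) m :
  monomial k (fun i => p i * m i)%N = (pow_prod k)%:R * monomial k m.
Proof.
rewrite /monomial /pow_prod natr_prod -big_split.
by apply: eq_bigr => i _; rewrite natrM exprMn natrX.
Qed.

Lemma monomial_eigvec (k : {ffun 'I_n -> nat}) : eigvec p (pow_prod k)%:R (monomial k).
Proof.
split; first exact: monomial_inH.
by apply: functional_extensionality => m; rewrite /US monomial_US.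
Qed.

Hypothesis p_prime : forall i, prime (p i).
Hypothesis p_inj : injective p.

Lemma logn_pow_prod k j : logn (p j) (pow_prod k) = k j.
Proof.
have [_ ->] : (0 < pow_prod k)%N /\
    logn (p j) (pow_prod k) = (\sum_(i < n) logn (p j) (p i ^ k i))%N.
  apply: (big_ind2 (fun a b => 0 < a /\ logn (p j) a = b)%N) => //.
  - by rewrite logn1.
  - by move=> a b a' b' [a_gt0 <-] [a'_gt0 <-]; rewrite muln_gt0 a_gt0 lognM.
  - by move=> i _; rewrite expn_gt0 prime_gt0.
rewrite (bigD1 j) //= lognX logn_prime // eqxx muln1 big1 ?addn0 // => i ij.
by rewrite lognX logn_prime // (inj_eq p_inj) eq_sym (negbTE ij) muln0.
Qed.

Lemma pow_prod_inj k k' : pow_prod k = pow_prod k' -> k =1 k'.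
Proof. by move=> E j; rewrite -(logn_pow_prod k j) E logn_pow_prod. Qed.

Lemma monomial_eq_pow_prod (k k' : {ffun 'I_n -> nat}) m :
  (pow_prod k)%:R = (pow_prod k')%:R :> C -> monomial k m = monomial k' m.
Proof.
move=> /eqP; rewrite eqr_nat => /eqP /pow_prod_inj kk'.
by rewrite /monomial; apply: eq_bigr => i _; rewrite kk'.
Qed.

End Monomials.

Theorem mainTheorem18 (n : nat) (p : 'I_n -> nat)
    (p_prime : forall i, prime (p i)) (p_inj : injective p) :
  (forall lam : C,
     in_spectrum p lam <->
     exists k : 'I_n -> nat, lam = (\prod_(i < n) p i ^ k i)%:R) /\
  (forall lam : C, in_spectrum p lam -> multiplicity_one p lam).
Proof.
have US_eigen lam F (x : 'I_n -> nat) : US p F = (fun m => lam * F m) ->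
    F (fun i => p i * x i)%N = lam * F x.
  by move/(congr1 (fun G => G x)).
have spectrum_pow_prod lam :
    in_spectrum p lam -> exists k : {ffun 'I_n -> nat}, lam = (pow_prod p k)%:R.
  move=> [F [[/inH_span_monomial [s F_s] /US_eigen F_eigen] F_neq0]].
  have [/mapP [a _ ->]|lam_notin] :=
    boolP (lam \in [seq (pow_prod p a.2)%:R | a : C * {ffun 'I_n -> nat} <- s]).
    by exists a.2.
  case: F_neq0; apply: functional_extensionality.
  exact: (eigenvalue_notin_zero (monomial_US p) F_s F_eigen lam_notin).
split=> [lam|lam /spectrum_pow_prod [k ->]]; first split.
- by move/spectrum_pow_prod => [k ->]; exists k.
- move=> [k ->]; exists (monomial [ffun i => k i]).
  have -> : (\prod_(i < n) p i ^ k i)%N = pow_prod p [ffun i => k i].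
    by apply: eq_bigr => i _; rewrite ffunE.
  by split; [apply: monomial_eigvec|apply: monomial_neq0].
exists (monomial k); split; [exact: monomial_eigvec|exact: monomial_neq0|].
move=> G [/inH_span_monomial [s G_s] /US_eigen G_eigen].
have [c G_c] := eigenvector_multiple (monomial_US p) G_s G_eigen
  (monomial_eq_pow_prod p_prime p_inj ^~ k).
by exists c; apply: functional_extensionality; exact: G_c.
Qed.
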